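(* Let $\theta\in\mathbb{C}^4$ and let $\sigma=\sigma_{i_1}\sigma_{i_2}\cdots\sigma_{i_n}$ with $n\ge1$, $(i_1,\dots,i_n)\in\{1,2,3\}^n$ and $i_\nu\ne i_{\nu+1}$ for all $\nu$. Then $\mathcal{E}(\sigma)=\bigcup_{\nu=1}^nL_{i_\nu}$, $\sigma(\mathcal{E}(\sigma))=\{p_{i_1}\}$, and $I(\sigma)=\{p_{i_n}\}$.
   Context: For $\theta\in\mathbb{C}^4$, $\overline{\mathcal{S}}(\theta)\subset\mathbb{P}^3$ is the cubic surface $X_1X_2X_3+X_0(X_1^2+X_2^2+X_3^2)-X_0^2(\theta_1X_1+\theta_2X_2+\theta_3X_3)+\theta_4X_0^3=0$; $L_i=\{X_0=X_i=0\}$ ($i=1,2,3$); $p_1=[0:1:0:0]$, $p_2=[0:0:1:0]$, $p_3=[0:0:0:1]$. For $\{i,j,k\}=\{1,2,3\}$, $\sigma_i$ is the birational involution of $\overline{\mathcal{S}}(\theta)$ given by $X'_0=X_0^2$, $X'_i=\theta_iX_0^2-X_0X_i-X_jX_k$, $X'_j=X_0X_j$, $X'_k=X_0X_k$. For a bimeromorphic map $f$ of a compact complex surface $S$, represented by its desingularized graph $\Gamma$ with proper modifications $\pi_1,\pi_2:\Gamma\to S$, $f=\pi_2\circ\pi_1^{-1}$, let $\mathcal{E}(\pi_i)=\{x\in\Gamma:\#\pi_i^{-1}(\pi_i(x))=\infty\}$; the exceptional set is $\mathcal{E}(f)=\pi_1(\mathcal{E}(\pi_2))$ and the indeterminacy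 set is $I(f)=\pi_1(\mathcal{E}(\pi_1))$. *)

From Stdlib Require Import Reals List.
From Coquelicot Require Import Coquelicot.
Import ListNotations.
Open Scope R_scope.

(* Homogeneous coordinates [X0:X1:X2:X3] of a point of P^3(C);
   a point is represented by any nzv vector. *)
Record V4 := mkV4 { X0 : C; X1 : C; X2 : C; X3 : C }.

Definition v4zero : V4 := mkV4 0%C 0%C 0%C 0%C.
Definition nzv (X : V4) : Prop := X <> v4zero.

Definition scale (l : C) (X : V4) : V4 :=
  mkV4 (l * X0 X)%C (l * X1 X)%C (l * X2 X)%C (l * X3 X)%C.

Definition proj_eq (X Y : V4) : Prop :=
  nzv X /\ nzv Y /\ exists l : C, l <> 0%C /\ Y = scale l X.

Inductive idx := I1 | I2 | I3.

Definition coord (i : idx) (X : V4) : C :=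
  match i with I1 => X1 X | I2 => X2 X | I3 => X3 X end.

Definition on_S (t1 t2 t3 t4 : C) (X : V4) : Prop :=
  nzv X /\
  (X1 X * X2 X * X3 X
   + X0 X * (X1 X * X1 X + X2 X * X2 X + X3 X * X3 X)
   - X0 X * X0 X * (t1 * X1 X + t2 * X2 X + t3 * X3 X)
   + t4 * (X0 X * X0 X * X0 X))%C = 0%C.

Definition on_L (i : idx) (X : V4) : Prop :=
  nzv X /\ X0 X = 0%C /\ coord i X = 0%C.

Definition pt (i : idx) : V4 :=
  match i with
  | I1 => mkV4 0%C 1%C 0%C 0%C
  | I2 => mkV4 0%C 0%C 1%C 0%C
  | I3 => mkV4 0%C 0%C 0%C 1%C
  end.

Definition sigma_formula (t1 t2 t3 : C) (i : idx) (X : V4) : V4 :=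
  let a := X0 X in let x := X1 X in let y := X2 X in let z := X3 X in
  match i with
  | I1 => mkV4 (a * a)%C (t1 * a * a - a * x - y * z)%C (a * y)%C (a * z)%C
  | I2 => mkV4 (a * a)%C (a * x)%C (t2 * a * a - a * y - x * z)%C (a * z)%C
  | I3 => mkV4 (a * a)%C (a * x)%C (a * y)%C (t3 * a * a - a * z - x * y)%C
  end.

(* Evaluation of the formula of sigma = sigma_{i_1} ... sigma_{i_n}
   (word [i_1; ...; i_n], sigma_{i_n} applied first) at a vector. *)
Fixpoint eval_word (t1 t2 t3 : C) (w : list idx) (X : V4) : V4 :=
  match w with
  | [] => X
  | i :: w' => sigma_formula t1 t2 t3 i (eval_word t1 t2 t3 w' X)
  end.

Fixpoint defined_at (t1 t2 t3 : C) (w : list idx) (X : V4) : Prop :=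
  match w with
  | [] => nzv X
  | _ :: w' => defined_at t1 t2 t3 w' X /\ nzv (eval_word t1 t2 t3 w X)
  end.

Definition close (X Y : V4) (e : R) : Prop :=
  Cmod (X0 X - X0 Y)%C < e /\ Cmod (X1 X - X1 Y)%C < e /\
  Cmod (X2 X - X2 Y)%C < e /\ Cmod (X3 X - X3 Y)%C < e.

Definition graph0 (t1 t2 t3 t4 : C) (w : list idx) (X Y : V4) : Prop :=
  on_S t1 t2 t3 t4 X /\ defined_at t1 t2 t3 w X /\ Y = eval_word t1 t2 t3 w X.

(* The graph Gamma of sigma: closure in P^3 x P^3 (Euclidean topology)
   of graph0.  (X, Y) in Gamma, for nzv representatives X, Y. *)
Definition graph (t1 t2 t3 t4 : C) (w : list idx) (X Y : V4) : Prop :=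
  nzv X /\ nzv Y /\
  forall e : R, 0 < e ->
    exists X' Y' : V4, graph0 t1 t2 t3 t4 w X' Y' /\
      exists l m : C, close X (scale l X') e /\ close Y (scale m Y') e.

Definition proj_infinite (P : V4 -> Prop) : Prop :=
  forall l : list V4, exists Y, P Y /\ forall Z, In Z l -> ~ proj_eq Z Y.

(* Indeterminacy set I(sigma) = pi_1(E(pi_1)). *)
Definition indet (t1 t2 t3 t4 : C) (w : list idx) (X : V4) : Prop :=
  (exists Y, graph t1 t2 t3 t4 w X Y) /\
  proj_infinite (fun Y => graph t1 t2 t3 t4 w X Y).

(* Exceptional set E(sigma) = pi_1(E(pi_2)). *)
Definition exc (t1 t2 t3 t4 : C) (w : list idx) (X : V4) : Prop :=
  exists Y, graph t1 t2 t3 t4 w X Y /\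
    proj_infinite (fun X' => graph t1 t2 t3 t4 w X' Y).

Definition sigma_image (t1 t2 t3 t4 : C) (w : list idx) (A : V4 -> Prop) (Y : V4) : Prop :=
  exists X, A X /\ ~ indet t1 t2 t3 t4 w X /\ graph t1 t2 t3 t4 w X Y.

Fixpoint no_repeat (w : list idx) : Prop :=
  match w with
  | i :: ((j :: _) as w') => i <> j /\ no_repeat w'
  | _ => True
  end.

From Stdlib Require Import Reals List Lra Classical.
From Coquelicot Require Import Coquelicot.
Import ListNotations.
Open Scope R_scope.

(* On the affine part [X0 <> 0] of [S] every [sigma_i] is a regular involution, so the
   graph of [sigma] is the closure of the graph over affine points and the graph of the
   reversed word is its transpose.  The plane at infinity meets [S] in the triangle
   [L1 + L2 + L3]: [sigma_i] contracts [L_i] to [p_i] and maps the other lines to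
   themselves, and at every point of [S] other than [p_i] it extends continuously,
   using one of the formulas obtained from [sigma_i] by multiplying with [X_i / X0] or
   with [quadric / (- X_j X_k)] modulo the cubic.  Following a point other than
   [p_(i_n)] through the word (which has no repeated consecutive letters) thus gives a
   continuous extension of [sigma] there: its fibre in the graph is one point, the
   lines [L_(i_nu)] go to [p_(i_1)], and every other point of infinity stays on an
   open line.  Conversely [p_(i_n)] is blown up to [L_(i_n)], being the image of
   [L_(i_n)] under the reversed word, and [p_(i_1)] has the whole union of the lines as
   its fibre.  For a single letter, [(p_i, p_i)] is excluded from the graph by a direct
   estimate. *)

Lemma Cmult_integral (a b : C) : (a * b = 0)%C -> a = 0%C \/ b = 0%C.
Proof.
  intros H. destruct (classic (a = 0%C)) as [Ha|Ha]; [now left|right].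
  replace b with (/ a * (a * b))%C by (field; auto). rewrite H; ring.
Qed.

Lemma Csub_eq0 (a b : C) : (a - b = 0)%C -> a = b.
Proof. intros H. replace a with ((a - b) + b)%C by ring. rewrite H; ring. Qed.

Lemma RtoC_neq0 (r : R) : r <> 0 -> RtoC r <> 0%C.
Proof. intros H E. apply H. injection E; auto. Qed.

Lemma Cmod_sub_sym (a b : C) : Cmod (a - b) = Cmod (b - a).
Proof. replace (b - a)%C with (- (a - b))%C by ring. now rewrite Cmod_opp. Qed.

Lemma Cmod_le_sub (a b : C) : Cmod a <= Cmod b + Cmod (a - b).
Proof. replace a with (b + (a - b))%C at 1 by ring. apply Cmod_triangle. Qed.

Lemma Cmod_0_sub (s : C) : Cmod (0 - s) = Cmod s.
Proof. replace (0 - s)%C with (- s)%C by ring. apply Cmod_opp. Qed.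

Lemma Cmod_sub_diag (u : C) : Cmod (u - u) = 0.
Proof. replace (u - u)%C with (RtoC 0) by ring. apply Cmod_0. Qed.

Lemma sum_sq_neq0 (a b : C) : (a * b = 0)%C -> a <> 0%C \/ b <> 0%C -> (a * a + b * b <> 0)%C.
Proof.
  intros Hab Hn. destruct (Cmult_integral _ _ Hab) as [-> | ->]; destruct Hn as [H|H];
    try contradiction; [replace (0 * 0 + b * b)%C with (b * b)%C by ring
                       |replace (a * a + 0 * 0)%C with (a * a)%C by ring]; now apply Cmult_neq_0.
Qed.

Lemma Rdiv_le_self e A : 0 <= e -> 1 <= A -> e / A <= e.
Proof.
  intros He HA. apply Rmult_le_reg_r with A; [lra|]. unfold Rdiv.
  rewrite Rmult_assoc, Rinv_l by lra. nra.
Qed.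

Lemma Cmod_factor_small (x u : C) : 1/2 < Cmod u -> Cmod (0 - x * u) < 1/8 -> Cmod x < 1/4.
Proof.
  rewrite Cmod_0_sub, Cmod_mult. intros Hu H. pose proof (Cmod_ge_0 x). nra.
Qed.

Lemma Csqrt_exists (w : C) : exists r : C, (r * r = w)%C.
Proof.
  destruct w as [p q].
  set (rho := sqrt (p * p + q * q)).
  assert (Hr2 : rho * rho = p * p + q * q) by (apply sqrt_sqrt; nra).
  assert (Hr0 : 0 <= rho) by apply sqrt_pos.
  assert (Hrp : Rabs p <= rho).
  { rewrite <- sqrt_Rsqr_abs. apply sqrt_le_1_alt. unfold Rsqr; nra. }
  assert (H1 : 0 <= (rho + p) / 2) by (pose proof (Rle_abs (-p)); rewrite Rabs_Ropp in H; lra).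
  assert (H2 : 0 <= (rho - p) / 2) by (pose proof (Rle_abs p); lra).
  set (re := sqrt ((rho + p) / 2)). set (im := sqrt ((rho - p) / 2)).
  assert (Hre : re * re = (rho + p) / 2) by (apply sqrt_sqrt; auto).
  assert (Him : im * im = (rho - p) / 2) by (apply sqrt_sqrt; auto).
  assert (Hri : re * im = Rabs q / 2).
  { unfold re, im. rewrite <- sqrt_mult by auto.
    replace ((rho + p) / 2 * ((rho - p) / 2)) with (Rsqr (Rabs q / 2)).
    - apply sqrt_Rsqr. pose proof (Rabs_pos q); lra.
    - unfold Rsqr. replace (Rabs q / 2 * (Rabs q / 2)) with ((Rabs q * Rabs q) / 4) by field.
      rewrite <- Rabs_mult, Rabs_right by nra. nra. }
  destruct (Rle_dec 0 q) as [Hq|Hq].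
  - exists (re, im). unfold Cmult; simpl. f_equal; [lra|].
    rewrite Rabs_right in Hri by lra. nra.
  - exists (re, - im). unfold Cmult; simpl. f_equal; [nra|].
    rewrite Rabs_left in Hri by lra. nra.
Qed.

Lemma Cmod_sqr (x : C) : Cmod x * Cmod x = fst x * fst x + snd x * snd x.
Proof. unfold Cmod. rewrite sqrt_sqrt; [simpl; ring|]. simpl. nra. Qed.

(* The root [-2 ga / (be + r)], with the square root [r] of the discriminant chosen so
   that [|be + r| >= |be|]. *)
Lemma quadratic_small_root (al be ga : C) : be <> 0%C ->
  exists s : C, (al * s * s + be * s + ga = 0)%C /\ Cmod s <= 2 * Cmod ga / Cmod be.
Proof.
  intros Hb. destruct (Csqrt_exists (be * be - 4 * al * ga)%C) as [r Hr].
  assert (Hpar : Cmod (be + r) * Cmod (be + r) + Cmod (be - r) * Cmod (be - r) =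
                 2 * (Cmod be * Cmod be) + 2 * (Cmod r * Cmod r)).
  { rewrite !Cmod_sqr. destruct be as [b1 b2], r as [r1 r2]. simpl. ring. }
  assert (Hbpos : 0 < Cmod be) by now apply Cmod_gt_0.
  assert (exists r' : C, (r' * r' = be * be - 4 * al * ga)%C /\ Cmod be <= Cmod (be + r'))
    as [r' [Hr' Hge]].
  { destruct (Rle_dec (Cmod be) (Cmod (be + r))) as [H|H]; [exists r; auto|].
    exists (- r)%C. split; [rewrite <- Hr; ring|].
    replace (be + - r)%C with (be - r)%C by ring.
    pose proof (Cmod_ge_0 (be - r)). pose proof (Cmod_ge_0 (be + r)). pose proof (Cmod_ge_0 r).
    nra. }
  assert (HD : (be + r')%C <> 0%C) by (intros E; rewrite E, Cmod_0 in Hge; lra).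
  remember (be + r')%C as D eqn:HDdef.
  exists (- (2) * ga / D)%C. split.
  - assert (E : ((al * (- (2) * ga / D) * (- (2) * ga / D) + be * (- (2) * ga / D) + ga) * (D * D)
                = ga * (4 * al * ga - 2 * be * D + D * D))%C) by (field; exact HD).
    assert (E2 : (4 * al * ga - 2 * be * D + D * D = 0)%C).
    { rewrite HDdef. transitivity (4 * al * ga - be * be + r' * r')%C; [ring|]. rewrite Hr'. ring. }
    rewrite E2, Cmult_0_r in E. apply Cmult_integral in E as [E|E]; auto.
    exfalso. apply Cmult_integral in E as [E|E]; auto.
  - rewrite Cmod_div, Cmod_mult by auto.
    replace (Cmod (- (2))) with 2.
    2:{ replace (- (2))%C with (RtoC (-2)) by (unfold RtoC, Copp; simpl; f_equal; ring).
        rewrite Cmod_R, Rabs_left; lra. }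
    unfold Rdiv. apply Rmult_le_compat_l; [pose proof (Cmod_ge_0 ga); lra|].
    now apply Rinv_le_contravar.
Qed.

Inductive slot := sl0 | sl1 | sl2 | sl3.

Definition entry (c : slot) (X : V4) : C :=
  match c with sl0 => X0 X | sl1 => X1 X | sl2 => X2 X | sl3 => X3 X end.

Definition slot_of (i : idx) : slot := match i with I1 => sl1 | I2 => sl2 | I3 => sl3 end.

Lemma coord_entry i X : coord i X = entry (slot_of i) X.
Proof. now destruct i. Qed.

Lemma V4_ext (X Y : V4) : (forall c, entry c X = entry c Y) -> X = Y.
Proof.
  destruct X, Y; intros H.
  pose proof (H sl0); pose proof (H sl1); pose proof (H sl2); pose proof (H sl3).
  simpl in *; subst; reflexivity.
Qed.

Lemma entry_scale c l X : entry c (scale l X) = (l * entry c X)%C.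
Proof. now destruct c. Qed.

Lemma coord_scale j l X : coord j (scale l X) = (l * coord j X)%C.
Proof. now destruct j. Qed.

Lemma scale1 X : scale 1%C X = X.
Proof. apply V4_ext; intros c; rewrite entry_scale; ring. Qed.

Lemma scale_scale (c l : C) X : scale c (scale l X) = scale (c * l) X.
Proof. apply V4_ext; intros k; rewrite !entry_scale; ring. Qed.

Lemma nzv_iff X : nzv X <-> exists c, entry c X <> 0%C.
Proof.
  unfold nzv; split.
  - intros H. apply NNPP; intros H'. apply H, V4_ext. intros c.
    destruct (classic (entry c X = 0%C)) as [E|E].
    + rewrite E; now destruct c.
    + exfalso; eauto.
  - intros [c Hc] ->. now destruct c.
Qed.

Lemma nzv_of_X0 X : X0 X <> 0%C -> nzv X.
Proof. intros H; apply nzv_iff; now exists sl0. Qed.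

Lemma nzv_of_coord i X : coord i X <> 0%C -> nzv X.
Proof. rewrite coord_entry; intros H; apply nzv_iff; eauto. Qed.

Lemma nzv_scale (l : C) X : l <> 0%C -> nzv X -> nzv (scale l X).
Proof.
  intros Hl HX. apply nzv_iff in HX as [c Hc]. apply nzv_iff. exists c.
  rewrite entry_scale. now apply Cmult_neq_0.
Qed.

Lemma nzv_scale_inv (l : C) X : nzv (scale l X) -> l <> 0%C.
Proof.
  intros H E. apply nzv_iff in H as [c Hc]. rewrite entry_scale, E in Hc. apply Hc; ring.
Qed.

Lemma close_iff X Y e : close X Y e <-> forall c, Cmod (entry c X - entry c Y) < e.
Proof.
  unfold close; split.
  - intros (?&?&?&?) c; destruct c; simpl; auto.
  - intros H; repeat split; [apply (H sl0)|apply (H sl1)|apply (H sl2)|apply (H sl3)].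
Qed.

Lemma close_coord_iff X Y e : close X Y e <->
  Cmod (X0 X - X0 Y) < e /\ forall j, Cmod (coord j X - coord j Y) < e.
Proof.
  unfold close; split.
  - intros (?&?&?&?). split; auto. intros []; auto.
  - intros [H H']. repeat split; auto; [apply (H' I1)|apply (H' I2)|apply (H' I3)].
Qed.

Lemma close_mono X Y e e' : e <= e' -> close X Y e -> close X Y e'.
Proof. rewrite !close_iff; intros H1 H2 c; specialize (H2 c); lra. Qed.

Lemma close_refl X e : 0 < e -> close X X e.
Proof. intros He. apply close_iff. intros c. rewrite Cmod_sub_diag. lra. Qed.

Lemma close_trans X Y Z e1 e2 : close X Y e1 -> close Y Z e2 -> close X Z (e1 + e2).
Proof.
  rewrite !close_iff. intros H1 H2 c.
  replace (entry c X - entry c Z)%C with ((entry c X - entry c Y) + (entry c Y - entry c Z))%C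
    by ring.
  eapply Rle_lt_trans; [apply Cmod_triangle|]. specialize (H1 c); specialize (H2 c); lra.
Qed.

Lemma close_scale X Y (c : C) e :
  close X Y e -> close (scale c X) (scale c Y) ((Cmod c + 1) * e).
Proof.
  rewrite !close_iff. intros H k. rewrite !entry_scale.
  replace (c * entry k X - c * entry k Y)%C with (c * (entry k X - entry k Y))%C by ring.
  rewrite Cmod_mult. specialize (H k).
  pose proof (Cmod_ge_0 c). pose proof (Cmod_ge_0 (entry k X - entry k Y)). nra.
Qed.

Lemma close_nzv W : nzv W -> exists d, 0 < d /\ forall X, close W X d -> nzv X.
Proof.
  intros H. apply nzv_iff in H as [c Hc]. exists (Cmod (entry c W)). split.
  - now apply Cmod_gt_0.
  - intros X HX. apply nzv_iff. exists c. intros E. rewrite close_iff in HX.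
    specialize (HX c). rewrite E in HX. replace (entry c W - 0)%C with (entry c W) in HX by ring.
    lra.
Qed.

Definition cont_at (f : V4 -> C) (W : V4) : Prop :=
  forall e, 0 < e -> exists d, 0 < d /\ forall X, close W X d -> Cmod (f W - f X) < e.

Lemma cont_at_const (k : C) W : cont_at (fun _ => k) W.
Proof. intros e He; exists 1; split; [lra|]. intros X _. rewrite Cmod_sub_diag; lra. Qed.

Lemma cont_at_entry c W : cont_at (entry c) W.
Proof. intros e He; exists e; split; auto. intros X H. now apply close_iff. Qed.

Lemma cont_at_coord i W : cont_at (coord i) W.
Proof.
  destruct i; [apply (cont_at_entry sl1)|apply (cont_at_entry sl2)|apply (cont_at_entry sl3)].
Qed.

Lemma cont_at_plus f g W : cont_at f W -> cont_at g W -> cont_at (fun X => f X + g X)%C W.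
Proof.
  intros Hf Hg e He.
  destruct (Hf (e/2)) as [d1 [Hd1 H1]]; [lra|].
  destruct (Hg (e/2)) as [d2 [Hd2 H2]]; [lra|].
  exists (Rmin d1 d2); split; [now apply Rmin_pos|].
  intros X HX.
  specialize (H1 X (close_mono _ _ _ _ (Rmin_l _ _) HX)).
  specialize (H2 X (close_mono _ _ _ _ (Rmin_r _ _) HX)).
  replace (f W + g W - (f X + g X))%C with ((f W - f X) + (g W - g X))%C by ring.
  eapply Rle_lt_trans; [apply Cmod_triangle|]. lra.
Qed.

Lemma cont_at_opp f W : cont_at f W -> cont_at (fun X => - f X)%C W.
Proof.
  intros Hf e He. destruct (Hf e He) as [d [Hd H]]. exists d; split; auto.
  intros X HX. replace (- f W - - f X)%C with (- (f W - f X))%C by ring.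
  rewrite Cmod_opp; auto.
Qed.

Lemma cont_at_minus f g W : cont_at f W -> cont_at g W -> cont_at (fun X => f X - g X)%C W.
Proof. intros; apply cont_at_plus; auto; now apply cont_at_opp. Qed.

Lemma cont_at_mult f g W : cont_at f W -> cont_at g W -> cont_at (fun X => f X * g X)%C W.
Proof.
  intros Hf Hg e He.
  set (A := Cmod (f W)). set (B := Cmod (g W)).
  assert (HA : 0 <= A) by apply Cmod_ge_0. assert (HB : 0 <= B) by apply Cmod_ge_0.
  destruct (Hg (Rmin 1 (e / (2 * (A + 1))))) as [d1 [Hd1 H1]].
  { apply Rmin_pos; [lra|]. apply Rdiv_lt_0_compat; lra. }
  destruct (Hf (e / (2 * (B + 2)))) as [d2 [Hd2 H2]].
  { apply Rdiv_lt_0_compat; lra. }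
  exists (Rmin d1 d2); split; [now apply Rmin_pos|].
  intros X HX.
  specialize (H1 X (close_mono _ _ _ _ (Rmin_l _ _) HX)).
  specialize (H2 X (close_mono _ _ _ _ (Rmin_r _ _) HX)).
  replace (f W * g W - f X * g X)%C with (f W * (g W - g X) + (f W - f X) * g X)%C by ring.
  eapply Rle_lt_trans; [apply Cmod_triangle|]. rewrite !Cmod_mult. fold A.
  assert (Hg1 : Cmod (g W - g X) < 1) by (eapply Rlt_le_trans; [apply H1|apply Rmin_l]).
  assert (Hg2 : Cmod (g W - g X) < e / (2 * (A + 1)))
    by (eapply Rlt_le_trans; [apply H1|apply Rmin_r]).
  assert (HgX : Cmod (g X) <= B + 1).
  { pose proof (Cmod_le_sub (g X) (g W)). rewrite Cmod_sub_sym in H. unfold B. lra. }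
  assert (E1 : A * Cmod (g W - g X) <= e / 2).
  { apply Rle_trans with ((A + 1) * (e / (2 * (A + 1)))).
    - pose proof (Cmod_ge_0 (g W - g X)). nra.
    - right. field. lra. }
  assert (E2 : Cmod (f W - f X) * Cmod (g X) < e / 2).
  { apply Rle_lt_trans with (Cmod (f W - f X) * (B + 2)).
    - apply Rmult_le_compat_l; [apply Cmod_ge_0|lra].
    - apply Rlt_le_trans with (e / (2 * (B + 2)) * (B + 2)).
      + apply Rmult_lt_compat_r; lra.
      + right; field; lra. }
  lra.
Qed.

Ltac solve_cont :=
  repeat first
    [ apply cont_at_plus | apply cont_at_minus | apply cont_at_mult | apply cont_at_opp
    | apply (cont_at_entry sl0) | apply (cont_at_entry sl1) | apply (cont_at_entry sl2)
    | apply (cont_at_entry sl3) | apply cont_at_const ].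

Lemma cont_at_nonzero f W :
  cont_at f W -> f W <> 0%C -> exists d, 0 < d /\ forall X, close W X d -> f X <> 0%C.
Proof.
  intros Hf H. destruct (Hf (Cmod (f W))) as [d [Hd H']]; [now apply Cmod_gt_0|].
  exists d; split; auto. intros X HX E. specialize (H' X HX). rewrite E in H'.
  replace (f W - 0)%C with (f W) in H' by ring. lra.
Qed.

Lemma cont_at_small f P : cont_at f P -> f P = 0%C ->
  exists d, 0 < d /\ forall X, close P X d -> Cmod (f X) < 1.
Proof.
  intros Hf H. destruct (Hf 1) as [d [Hd H']]; [lra|]. exists d; split; auto.
  intros X HX. specialize (H' X HX). now rewrite H, Cmod_0_sub in H'.
Qed.

Lemma cont_at_close (F : V4 -> V4) W : (forall c, cont_at (fun X => entry c (F X)) W) ->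
  forall e, 0 < e -> exists d, 0 < d /\ forall X, close W X d -> close (F W) (F X) e.
Proof.
  intros H e He.
  destruct (H sl0 e He) as [d0 [Hd0 H0]]. destruct (H sl1 e He) as [d1 [Hd1 H1]].
  destruct (H sl2 e He) as [d2 [Hd2 H2]]. destruct (H sl3 e He) as [d3 [Hd3 H3]].
  exists (Rmin (Rmin d0 d1) (Rmin d2 d3)). split; [repeat apply Rmin_pos; auto|].
  intros X HX. apply close_iff. intros c.
  pose proof (Rmin_l (Rmin d0 d1) (Rmin d2 d3)). pose proof (Rmin_r (Rmin d0 d1) (Rmin d2 d3)).
  pose proof (Rmin_l d0 d1). pose proof (Rmin_r d0 d1).
  pose proof (Rmin_l d2 d3). pose proof (Rmin_r d2 d3).
  destruct c; [apply H0|apply H1|apply H2|apply H3]; eapply close_mono; try apply HX; lra.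
Qed.

Lemma cont_at_closed f W :
  cont_at f W -> (forall e, 0 < e -> exists X, close W X e /\ f X = 0%C) -> f W = 0%C.
Proof.
  intros Hf H. apply Cmod_eq_0, Rle_antisym; [|apply Cmod_ge_0]. apply Rnot_lt_le; intros Hp.
  destruct (Hf _ Hp) as [d [Hd Hd']]. destruct (H d Hd) as [X [HX E]].
  specialize (Hd' X HX). rewrite E in Hd'. replace (f W - 0)%C with (f W) in Hd' by ring. lra.
Qed.

Lemma proj_eq_sym X Y : proj_eq X Y -> proj_eq Y X.
Proof.
  intros [HX [HY [l [Hl ->]]]]. repeat split; auto. exists (/ l)%C; split.
  - intros E. apply C1_nz. rewrite <- (Cinv_l l Hl), E. ring.
  - rewrite scale_scale, Cinv_l by exact Hl. now rewrite scale1.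
Qed.

Lemma proj_eq_trans X Y Z : proj_eq X Y -> proj_eq Y Z -> proj_eq X Z.
Proof.
  intros [HX [_ [l [Hl ->]]]] [_ [HZ [m [Hm ->]]]]. repeat split; auto.
  exists (m * l)%C; split; [now apply Cmult_neq_0|]. apply scale_scale.
Qed.

Lemma proj_eq_scale X (l : C) : nzv X -> l <> 0%C -> proj_eq X (scale l X).
Proof. intros H Hl. repeat split; auto; [now apply nzv_scale|eauto]. Qed.

Lemma proj_eq_of_minors W Y : nzv W -> nzv Y ->
  (forall c c', (entry c Y * entry c' W = entry c' Y * entry c W)%C) -> proj_eq W Y.
Proof.
  intros HW HY H. pose proof HW as [c0 Hc0]%nzv_iff.
  set (l := (entry c0 Y / entry c0 W)%C).
  assert (E : forall c, entry c Y = (l * entry c W)%C).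
  { intros c. unfold l. specialize (H c c0).
    apply (f_equal (fun u => u / entry c0 W)%C) in H.
    replace (entry c Y * entry c0 W / entry c0 W)%C with (entry c Y) in H by (field; auto).
    rewrite H. field; auto. }
  repeat split; auto. exists l; split.
  - intros El. apply HY, V4_ext. intros c. rewrite E, El. destruct c; simpl; ring.
  - apply V4_ext; intros c; now rewrite entry_scale.
Qed.

Lemma not_proj_infinite (P : V4 -> Prop) W : (forall Y, P Y -> proj_eq W Y) -> ~ proj_infinite P.
Proof. intros H Hi. destruct (Hi [W]) as [Y [HP HY]]. apply (HY W); [now left|auto]. Qed.

Lemma nzv_pt i : nzv (pt i).
Proof. apply (nzv_of_coord i); destruct i; apply C1_nz. Qed.

Lemma pt_iff i Y : proj_eq (pt i) Y <->
  X0 Y = 0%C /\ coord i Y <> 0%C /\ forall j, j <> i -> coord j Y = 0%C.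
Proof.
  split.
  - intros [_ [HY [l [Hl ->]]]].
    destruct i; repeat split; simpl; try ring; try (rewrite Cmult_1_r; exact Hl);
      intros j Hj; destruct j; simpl; try congruence; ring.
  - intros [H0 [Hi Hj]]. repeat split; [apply nzv_pt|now apply (nzv_of_coord i)|].
    exists (coord i Y); split; auto.
    destruct Y as [a x y z]; simpl in H0; subst a.
    pose proof (Hj I1) as H1; pose proof (Hj I2) as H2; pose proof (Hj I3) as H3.
    destruct i; simpl in *;
      repeat match goal with
      | H : ?j <> ?j -> _ |- _ => clear H
      | H : _ <> _ -> _ |- _ => specialize (H ltac:(discriminate))
      end; subst; unfold scale; simpl; f_equal; ring.
Qed.

Lemma pt_injective i j Y : proj_eq (pt i) Y -> proj_eq (pt j) Y -> i = j.
Proof.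
  intros [_ [Hi _]]%pt_iff [_ [_ Hj]]%pt_iff.
  apply NNPP; intros E. apply Hi, Hj. congruence.
Qed.

Lemma pt_on_L i j Y : proj_eq (pt i) Y -> i <> j -> on_L j Y.
Proof.
  intros H Hij. pose proof H as [_ [HY _]]. apply pt_iff in H as [H0 [_ H]].
  repeat split; auto.
Qed.

Definition succ_idx (i : idx) : idx := match i with I1 => I2 | I2 => I3 | I3 => I1 end.
Definition pred_idx (i : idx) : idx := match i with I1 => I3 | I2 => I1 | I3 => I2 end.

Definition idx_eq_dec (i j : idx) : {i = j} + {i <> j}.
Proof. decide equality. Defined.

Definition vec (a : C) (f : idx -> C) : V4 := mkV4 a (f I1) (f I2) (f I3).

Lemma idx_cases i j : j = i \/ j = succ_idx i \/ j = pred_idx i.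
Proof. destruct i, j; simpl; auto. Qed.

Lemma succ_idx_neq i : succ_idx i <> i.
Proof. now destruct i. Qed.

Lemma pred_idx_neq i : pred_idx i <> i.
Proof. now destruct i. Qed.

Lemma nzv_infinity X : nzv X -> X0 X = 0%C -> exists l, coord l X <> 0%C.
Proof.
  intros [c Hc]%nzv_iff H0; destruct c; [contradiction|exists I1|exists I2|exists I3]; auto.
Qed.

Lemma third_idx (i j : idx) : exists k, k <> i /\ k <> j.
Proof.
  destruct i, j; [exists I2|exists I3|exists I2|exists I3|exists I1|exists I1|exists I2
                 |exists I1|exists I1]; split; discriminate.
Qed.

Definition co_prod (i : idx) (X : V4) : C :=
  (coord (succ_idx i) X * coord (pred_idx i) X)%C.

Lemma prod_coords_split i X : (X1 X * X2 X * X3 X = coord i X * co_prod i X)%C.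
Proof. destruct i; unfold co_prod; simpl; ring. Qed.

Lemma co_prod_other_zero i k X : k <> i -> coord k X = 0%C -> co_prod i X = 0%C.
Proof.
  intros Hk H. unfold co_prod.
  destruct (idx_cases i k) as [->|[->| ->]]; [congruence| |]; rewrite H; ring.
Qed.

(* [L_k] minus its two points [p_j], [j <> k]. *)
Definition on_open_L (k : idx) (X : V4) : Prop :=
  X0 X = 0%C /\ coord k X = 0%C /\ forall j, j <> k -> coord j X <> 0%C.

Lemma on_open_L_nzv k X : on_open_L k X -> nzv X.
Proof. intros [_ [_ Hj]]. apply (nzv_of_coord (succ_idx k)), Hj, succ_idx_neq. Qed.

Lemma on_open_L_on_L k X : on_open_L k X -> on_L k X.
Proof. intros H. pose proof (on_open_L_nzv k X H). destruct H as [? [? _]]. now repeat split. Qed.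

Lemma on_open_L_not_pt k j X : on_open_L k X -> ~ proj_eq (pt j) X.
Proof.
  intros [_ [Hk Hj]] [_ [Hpj Hp]]%pt_iff.
  destruct (classic (k = j)) as [->|Hkj]; [contradiction|].
  destruct (third_idx k j) as [r [Hr1 Hr2]]. exact (Hj r Hr1 (Hp r Hr2)).
Qed.

Lemma on_open_L_unique k j X : on_open_L k X -> on_L j X -> k = j.
Proof. intros [_ [_ Hj]] [_ [_ Hc]]. apply NNPP; intros E. apply (Hj j); auto. Qed.

Lemma affine_not_pt j X : X0 X <> 0%C -> ~ proj_eq (pt j) X.
Proof. intros H [Hp _]%pt_iff. contradiction. Qed.

Lemma coord_vec j a f : coord j (vec a f) = f j.
Proof. now destruct j. Qed.

Definition line_point (i : idx) (t : R) : V4 :=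
  vec 0 (fun j => if idx_eq_dec j i then 0 else if idx_eq_dec j (succ_idx i) then 1 else RtoC t).

Lemma line_point_open i t : t <> 0 -> on_open_L i (line_point i t).
Proof.
  intros Ht. unfold line_point. split; [reflexivity|]. rewrite coord_vec. split.
  - now destruct (idx_eq_dec i i).
  - intros j Hj. rewrite coord_vec. destruct (idx_eq_dec j i); [contradiction|].
    destruct (idx_eq_dec j (succ_idx i)); [apply C1_nz|now apply RtoC_neq0].
Qed.

Definition line_ratio (i : idx) (Z : V4) : C := (coord (pred_idx i) Z / coord (succ_idx i) Z)%C.

Lemma line_ratio_point i t Z : proj_eq Z (line_point i t) -> line_ratio i Z = RtoC t.
Proof.
  intros [_ [_ [c [Hc E]]]].
  assert (E1 : (c * coord (succ_idx i) Z)%C = 1%C)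
    by (rewrite <- coord_scale, <- E; destruct i; reflexivity).
  assert (E2 : (c * coord (pred_idx i) Z)%C = RtoC t)
    by (rewrite <- coord_scale, <- E; destruct i; reflexivity).
  assert (Hs : coord (succ_idx i) Z <> 0%C).
  { intros H. rewrite H, Cmult_0_r in E1. now apply C1_nz. }
  unfold line_ratio.
  transitivity ((c * coord (pred_idx i) Z) / (c * coord (succ_idx i) Z))%C.
  - field. split; assumption.
  - rewrite E1, E2. field.
Qed.

Lemma list_bound (A : Type) (f : A -> R) (l : list A) :
  exists M, 0 < M /\ forall a, In a l -> f a < M.
Proof.
  induction l as [|a l [M [HM H]]]; [exists 1; split; [lra|intros _ []]|].
  exists (Rmax M (f a + 1)). split; [eapply Rlt_le_trans; [exact HM|apply Rmax_l]|].
  intros b [<-|Hb].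
  - eapply Rlt_le_trans; [|apply Rmax_r]. lra.
  - eapply Rlt_le_trans; [apply H, Hb|apply Rmax_l].
Qed.

Lemma proj_infinite_line i (P : V4 -> Prop) :
  (forall t, 0 < t -> P (line_point i t)) -> proj_infinite P.
Proof.
  intros HP l. destruct (list_bound _ (fun Z => Cmod (line_ratio i Z)) l) as [M [HM H]].
  exists (line_point i M). split; [now apply HP|]. intros Z HZ Hp.
  specialize (H Z HZ). simpl in H. rewrite (line_ratio_point _ _ _ Hp), Cmod_R, Rabs_right in H;
    lra.
Qed.

Lemma approx_nonzero (y : C) e : 0 < e -> exists y' : C, y' <> 0%C /\ Cmod (y - y') < e.
Proof.
  intros He. destruct (classic (y = 0%C)) as [->|Hy].
  - exists (RtoC (e / 2)). split; [apply RtoC_neq0; lra|].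
    rewrite Cmod_0_sub, Cmod_R, Rabs_right; lra.
  - exists y. split; auto. rewrite Cmod_sub_diag; lra.
Qed.

Lemma on_L_open_dense i X : on_L i X -> forall e, 0 < e ->
  exists Z, on_open_L i Z /\ close X Z e.
Proof.
  intros [_ [H0 Hi]] e He.
  destruct (approx_nonzero (coord (succ_idx i) X) e He) as [y1 [Hy1 Hc1]].
  destruct (approx_nonzero (coord (pred_idx i) X) e He) as [y2 [Hy2 Hc2]].
  exists (vec 0 (fun j => if idx_eq_dec j i then 0%C
                          else if idx_eq_dec j (succ_idx i) then y1 else y2)).
  split; [split; [reflexivity|split]|apply close_coord_iff; split].
  - rewrite coord_vec. now destruct (idx_eq_dec i i).
  - intros j Hj. rewrite coord_vec. destruct (idx_eq_dec j i); [contradiction|].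
    now destruct (idx_eq_dec j (succ_idx i)).
  - simpl. rewrite H0, Cmod_sub_diag. lra.
  - intros j. rewrite coord_vec. destruct (idx_eq_dec j i) as [->|Hji].
    + rewrite Hi, Cmod_sub_diag. lra.
    + destruct (idx_eq_dec j (succ_idx i)) as [->|Hjs]; [exact Hc1|].
      destruct (idx_cases i j) as [E|[E|E]]; [congruence|congruence|subst j; exact Hc2].
Qed.

Lemma no_repeat_tail (a : idx) l : no_repeat (a :: l) -> no_repeat l.
Proof. destruct l; simpl; tauto. Qed.

Lemma no_repeat_snoc l (a : idx) : no_repeat l -> (l = [] \/ last l a <> a) -> no_repeat (l ++ [a]).
Proof.
  induction l as [|x l IH]; intros Hn Hl; simpl; auto.
  destruct l as [|y l'].
  - simpl. destruct Hl as [H|H]; [discriminate|]. simpl in H. split; auto.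
  - destruct Hn as [Hxy Hn]. simpl. split; auto. apply IH; auto.
    destruct Hl as [H|H]; [discriminate|]. right. simpl in H |- *. auto.
Qed.

Lemma no_repeat_rev l : no_repeat l -> no_repeat (rev l).
Proof.
  induction l as [|x l IH]; intros H; simpl; auto.
  apply no_repeat_snoc; [apply IH; eapply no_repeat_tail; eauto|].
  destruct l as [|y l']; [left; reflexivity|]. right. simpl. rewrite last_last.
  destruct H as [Hxy _]. congruence.
Qed.

Lemma rev_word i w : no_repeat (i :: w) ->
  exists v, rev (i :: w) = last (i :: w) i :: v /\ no_repeat (last (i :: w) i :: v) /\
            last (last (i :: w) i :: v) (last (i :: w) i) = i.
Proof.
  intros Hw. exists (rev (removelast (i :: w))).
  assert (E : rev (i :: w) = last (i :: w) i :: rev (removelast (i :: w))).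
  { rewrite (app_removelast_last i (l := i :: w)) at 1 by discriminate.
    now rewrite rev_app_distr. }
  rewrite <- E. split; [reflexivity|split; [now apply no_repeat_rev|]].
  simpl. apply last_last.
Qed.

Lemma last_cons_default (k : idx) l d d' : last (k :: l) d = last (k :: l) d'.
Proof.
  revert k. induction l as [|a l IH]; intros k; simpl; auto.
  specialize (IH a). simpl in IH. destruct l; auto.
Qed.

Lemma exists_letter_neq_last (i k : idx) w : no_repeat (i :: k :: w) ->
  exists j, In j (i :: k :: w) /\ j <> last (i :: k :: w) i.
Proof.
  intros [Hk _]. destruct (classic (i = last (i :: k :: w) i)) as [E|E].
  - exists k. split; [simpl; auto|congruence].
  - exists i. split; [simpl; auto|exact E].
Qed.

(** * Algebra of the involutions *)

Section Surface.
Variables t1 t2 t3 t4 : C.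

Notation onS := (on_S t1 t2 t3 t4).
Notation sig := (sigma_formula t1 t2 t3).
Notation ev := (eval_word t1 t2 t3).
Notation dfd := (defined_at t1 t2 t3).

Definition cubic (X : V4) : C :=
  (X1 X * X2 X * X3 X
   + X0 X * (X1 X * X1 X + X2 X * X2 X + X3 X * X3 X)
   - X0 X * X0 X * (t1 * X1 X + t2 * X2 X + t3 * X3 X)
   + t4 * (X0 X * X0 X * X0 X))%C.

Lemma cubic_scale (l : C) X : cubic (scale l X) = (l * l * l * cubic X)%C.
Proof. destruct X; unfold cubic, scale; simpl; ring. Qed.

Lemma cubic_infinity i X : X0 X = 0%C -> cubic X = (coord i X * co_prod i X)%C.
Proof. intros H. rewrite <- prod_coords_split. unfold cubic. rewrite H. ring. Qed.

Lemma X0_sig i X : X0 (sig i X) = (X0 X * X0 X)%C.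
Proof. now destruct i. Qed.

Lemma sig_scale i (l : C) X : sig i (scale l X) = scale (l * l) (sig i X).
Proof. destruct i, X; unfold scale; simpl; f_equal; ring. Qed.

Lemma cubic_sig i X : cubic (sig i X) = (X0 X * X0 X * X0 X * cubic X)%C.
Proof. destruct i, X; unfold cubic; simpl; ring. Qed.

Lemma on_S_sig i X : onS X -> nzv (sig i X) -> onS (sig i X).
Proof.
  intros [_ HS] Hn. split; auto. fold (cubic (sig i X)).
  rewrite cubic_sig. change (cubic X = 0%C) in HS. rewrite HS; ring.
Qed.

Lemma sig_involutive i X : sig i (sig i X) = scale (X0 X * X0 X * X0 X) X.
Proof. destruct i, X; unfold scale; simpl; f_equal; ring. Qed.

Lemma sig_infinity i X : X0 X = 0%C -> sig i X = scale (- co_prod i X) (pt i).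
Proof.
  destruct X as [a x y z]; simpl; intros ->.
  destruct i; unfold co_prod, scale; simpl; f_equal; ring.
Qed.

Lemma sig_on_L i X : nzv (sig i X) -> on_L i X -> proj_eq (pt i) (sig i X).
Proof.
  intros Hs [_ [H0 _]]. rewrite sig_infinity in Hs |- * by exact H0.
  apply proj_eq_scale; [apply nzv_pt|]. exact (nzv_scale_inv _ _ Hs).
Qed.

Lemma sig_on_open_L i k X : k <> i -> on_open_L k X -> ~ nzv (sig i X).
Proof.
  intros Hk [H0 [HkX _]] Hs. rewrite sig_infinity in Hs by exact H0.
  apply (nzv_scale_inv _ _ Hs). rewrite (co_prod_other_zero i k X Hk HkX). ring.
Qed.

Lemma eval_app w1 w2 X : ev (w1 ++ w2) X = ev w1 (ev w2 X).
Proof. induction w1; simpl; congruence. Qed.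

Lemma eval_scale w (l : C) X :
  l <> 0%C -> exists c : C, c <> 0%C /\ ev w (scale l X) = scale c (ev w X).
Proof.
  intros Hl. induction w as [|i w IH]; simpl; [eauto|].
  destruct IH as [c [Hc ->]]. rewrite sig_scale. exists (c * c)%C; split; auto.
  now apply Cmult_neq_0.
Qed.

Lemma defined_at_nzv w X : dfd w X -> nzv (ev w X).
Proof. destruct w; simpl; tauto. Qed.

Lemma on_S_eval w X : onS X -> dfd w X -> onS (ev w X).
Proof.
  induction w as [|i w IH]; simpl; auto.
  intros HS [Hd Hn]. apply on_S_sig; auto.
Qed.

Lemma X0_eval_affine w X : X0 X <> 0%C -> X0 (ev w X) <> 0%C.
Proof.
  induction w as [|i w IH]; simpl; auto. intros H. rewrite X0_sig. apply Cmult_neq_0; auto.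
Qed.

Lemma defined_at_affine w X : X0 X <> 0%C -> dfd w X.
Proof.
  induction w as [|i w IH]; simpl; intros H; [now apply nzv_of_X0|].
  split; auto. apply nzv_of_X0. rewrite X0_sig. apply Cmult_neq_0; now apply X0_eval_affine.
Qed.

Lemma eval_rev w X :
  X0 X <> 0%C -> exists c : C, c <> 0%C /\ ev (rev w) (ev w X) = scale c X.
Proof.
  induction w as [|i w IH]; simpl; intros H.
  - exists 1%C; split; [apply C1_nz|]. now rewrite scale1.
  - rewrite eval_app. simpl. set (Y := ev w X).
    assert (HY : X0 Y <> 0%C) by now apply X0_eval_affine.
    rewrite sig_involutive.
    destruct (eval_scale (rev w) (X0 Y * X0 Y * X0 Y) Y) as [c1 [Hc1 ->]].
    { repeat apply Cmult_neq_0; auto. }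
    destruct (IH H) as [c [Hc E]]. unfold Y; rewrite E, scale_scale.
    exists (c1 * c)%C; split; [now apply Cmult_neq_0|reflexivity].
Qed.

(* Two steps at infinity: [sigma_i] maps the plane at infinity to [p_i], and the next
   letter kills [p_i]. *)
Lemma not_defined_at_infinity i j w X : X0 X = 0%C -> ~ dfd (i :: j :: w) X.
Proof.
  intros H0 [[Hd _] Hn]. simpl in Hn.
  assert (H0' : X0 (ev w X) = 0%C).
  { clear Hd Hn. induction w as [|k w IH]; simpl; auto. rewrite X0_sig, IH; ring. }
  rewrite (sig_infinity j) in Hn by exact H0'.
  rewrite sig_infinity in Hn by (destruct j; simpl; ring).
  apply (nzv_scale_inv _ _ Hn).
  unfold co_prod; destruct i, j; simpl; ring.
Qed.

(** * Continuous extension of the formulas *)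

(* The formula of [sigma] along [w] extends continuously at [Z] with value [W]. *)
Definition extends (w : list idx) (Z W : V4) : Prop :=
  forall e, 0 < e -> exists d, 0 < d /\ forall X (l : C), onS X -> dfd w X ->
    close Z (scale l X) d -> exists m : C, close W (scale m (ev w X)) e.

Lemma extends_nil Z : extends [] Z Z.
Proof. intros e He. exists e; split; auto. intros X l _ _ H. now exists l. Qed.

Lemma extends_cons i w Z W W' : extends w Z W -> extends [i] W W' -> extends (i :: w) Z W'.
Proof.
  intros Hw Hi e He. destruct (Hi e He) as [d1 [Hd1 H1]].
  destruct (Hw d1 Hd1) as [d [Hd H]]. exists d; split; auto.
  intros X l HS [Hdf Hn] HX. destruct (H X l HS Hdf HX) as [m Hm].
  apply (H1 (ev w X) m); [now apply on_S_eval| |exact Hm].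
  split; [now apply defined_at_nzv|exact Hn].
Qed.

(* If [h sigma_i = k F] on [S] with [h W <> 0], then [sigma_i] agrees projectively with
   [F] near [W], since [k] cannot vanish where [sigma_i] does not. *)
Lemma extends_of_identity i (h k : V4 -> C) (F : V4 -> V4) W :
  (forall X, cubic X = 0%C -> forall c, (h X * entry c (sig i X) = k X * entry c (F X))%C) ->
  cont_at h W -> (forall c, cont_at (fun X => entry c (F X)) W) -> h W <> 0%C -> nzv W ->
  extends [i] W (F W).
Proof.
  intros Hid Hh HF HhW HW e He.
  destruct (cont_at_nonzero h W Hh HhW) as [d1 [Hd1 H1]].
  destruct (close_nzv W HW) as [d2 [Hd2 H2]].
  destruct (cont_at_close F W HF e He) as [d3 [Hd3 H3]].
  exists (Rmin d1 (Rmin d2 d3)). split; [repeat apply Rmin_pos; auto|].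
  intros X l HS [_ Hn] HX. simpl in Hn |- *.
  pose proof (Rmin_l d1 (Rmin d2 d3)). pose proof (Rmin_r d1 (Rmin d2 d3)).
  pose proof (Rmin_l d2 d3). pose proof (Rmin_r d2 d3).
  set (Z := scale l X) in *.
  assert (Hl : l <> 0%C).
  { apply (nzv_scale_inv l X), H2. eapply close_mono; [|apply HX]; lra. }
  assert (HZS : cubic Z = 0%C).
  { unfold Z. rewrite cubic_scale. destruct HS as [_ HS]. change (cubic X = 0%C) in HS.
    rewrite HS; ring. }
  assert (HhZ : h Z <> 0%C) by (apply H1; eapply close_mono; [|apply HX]; lra).
  assert (HsZ : sig i Z = scale (l * l) (sig i X)) by apply sig_scale.
  assert (HkZ : k Z <> 0%C).
  { intros Ek. assert (Hn2 : nzv (sig i Z)).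
    { rewrite HsZ. apply nzv_scale; auto. now apply Cmult_neq_0. }
    apply nzv_iff in Hn2 as [c Hc]. pose proof (Hid Z HZS c) as E. rewrite Ek, Cmult_0_l in E.
    destruct (Cmult_integral _ _ E); contradiction. }
  exists (h Z * (l * l) / k Z)%C.
  replace (scale (h Z * (l * l) / k Z) (sig i X)) with (F Z).
  - apply H3. eapply close_mono; [|apply HX]; lra.
  - apply V4_ext. intros c. rewrite entry_scale. pose proof (Hid Z HZS c) as E.
    rewrite HsZ, entry_scale in E.
    apply (f_equal (fun u => u / k Z)%C) in E.
    replace (k Z * entry c (F Z) / k Z)%C with (entry c (F Z)) in E by (field; auto).
    rewrite <- E. field; auto.
Qed.

Definition theta (i : idx) : C := match i with I1 => t1 | I2 => t2 | I3 => t3 end.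

(* [cubic = X1 X2 X3 + X0 quadric]. *)
Definition quadric (X : V4) : C :=
  (X1 X * X1 X + X2 X * X2 X + X3 X * X3 X - X0 X * (t1 * X1 X + t2 * X2 X + t3 * X3 X)
   + t4 * X0 X * X0 X)%C.

Definition co_lin (j : idx) (X : V4) : C := (coord j X - X0 X * theta j)%C.

Definition co_quadric (i : idx) (X : V4) : C :=
  (coord (succ_idx i) X * co_lin (succ_idx i) X + coord (pred_idx i) X * co_lin (pred_idx i) X
   + t4 * X0 X * X0 X)%C.

(* On [S], [sigma_i] equals [(X0 / X_i) alt_sig i] and [- (co_prod i / quadric) alt_sig i]:
   multiply [sigma_i] by [X_i] and reduce modulo the cubic. *)
Definition alt_sig (i : idx) (X : V4) : V4 :=
  vec (X0 X * coord i X)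
      (fun j => if idx_eq_dec j i then co_quadric i X else coord i X * coord j X)%C.

Lemma X0_alt_sig i X : X0 (alt_sig i X) = (X0 X * coord i X)%C.
Proof. reflexivity. Qed.

Lemma coord_alt_sig_self i X : coord i (alt_sig i X) = co_quadric i X.
Proof. destruct i; reflexivity. Qed.

Lemma coord_alt_sig_other i j X :
  j <> i -> coord j (alt_sig i X) = (coord i X * coord j X)%C.
Proof. intros H. destruct i, j; try congruence; reflexivity. Qed.

Lemma co_prod_alt_sig i X :
  co_prod i (alt_sig i X) = (coord i X * coord i X * co_prod i X)%C.
Proof.
  unfold co_prod. rewrite !coord_alt_sig_other by (apply succ_idx_neq || apply pred_idx_neq).
  ring.
Qed.

Ltac reduce_mod_cubic m :=
  match goal with
  | HS : cubic ?X = _ |- ?A = ?B =>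
    transitivity (B + m * cubic X)%C;
      [unfold cubic, quadric, alt_sig, vec, co_quadric, co_lin, co_prod, theta; simpl; ring
      | rewrite HS; ring]
  end.

Lemma alt_sig_coord_identity i X : cubic X = 0%C ->
  forall c, (coord i X * entry c (sig i X) = X0 X * entry c (alt_sig i X))%C.
Proof.
  intros HS c; destruct i, c; reduce_mod_cubic (RtoC 0) || reduce_mod_cubic (RtoC (-1)).
Qed.

Lemma alt_sig_quadric_identity i X : cubic X = 0%C ->
  forall c, (quadric X * entry c (sig i X) = - co_prod i X * entry c (alt_sig i X))%C.
Proof.
  intros HS c; destruct i, c; simpl;
    first [ reduce_mod_cubic (X0 X) | reduce_mod_cubic (X1 X) | reduce_mod_cubic (X2 X)
          | reduce_mod_cubic (X3 X) | reduce_mod_cubic (t1 * X0 X - X1 X)%C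
          | reduce_mod_cubic (t2 * X0 X - X2 X)%C | reduce_mod_cubic (t3 * X0 X - X3 X)%C ].
Qed.

Lemma cont_at_sig_entry i c W : cont_at (fun X => entry c (sig i X)) W.
Proof. destruct i, c; simpl; solve_cont. Qed.

Lemma cont_at_alt_sig_entry i c W : cont_at (fun X => entry c (alt_sig i X)) W.
Proof. destruct i, c; simpl; unfold co_quadric, co_lin; simpl; solve_cont. Qed.

Definition sigma_step (i : idx) (W W' : V4) : Prop :=
  onS W' /\ extends [i] W W' /\ (X0 W <> 0%C -> X0 W' <> 0%C) /\
  (on_L i W -> proj_eq (pt i) W') /\ (forall k, k <> i -> on_open_L k W -> on_open_L k W').

Lemma sigma_step_defined i W : onS W -> nzv (sig i W) -> sigma_step i W (sig i W).
Proof.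
  intros HS Hs. split; [now apply on_S_sig|]. split.
  { apply (extends_of_identity i (fun _ => 1%C) (fun _ => 1%C) (sig i)); auto.
    - apply cont_at_const.
    - intros c; apply cont_at_sig_entry.
    - apply C1_nz.
    - apply HS. }
  split; [intros H; rewrite X0_sig; now apply Cmult_neq_0|].
  split; [now apply sig_on_L|].
  intros k Hk Hint. exfalso. exact (sig_on_open_L i k W Hk Hint Hs).
Qed.

(* Where [sigma_i W = 0], i.e. at the points of the plane at infinity where
   [X_j X_k = 0], the alternative formula takes over, except at [p_i]. *)
Lemma sigma_step_alt i W : onS W -> X0 W = 0%C -> co_prod i W = 0%C ->
  ~ proj_eq (pt i) W -> sigma_step i W (alt_sig i W).
Proof.
  intros HS H0 Hc Hp. pose proof HS as [HWn HWS].
  assert (Hjk : coord (succ_idx i) W <> 0%C \/ coord (pred_idx i) W <> 0%C).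
  { apply NNPP; intros H. apply Hp, pt_iff. split; [exact H0|split].
    - destruct (nzv_infinity W HWn H0) as [l Hl].
      destruct (idx_cases i l) as [E|[E|E]]; subst l; [exact Hl| |];
        exfalso; apply H; [left|right]; exact Hl.
    - intros l Hl. destruct (idx_cases i l) as [E|[E|E]]; subst l; [congruence| |];
        apply NNPP; intros E; apply H; [left|right]; exact E. }
  assert (Hq : co_quadric i W = (coord (succ_idx i) W * coord (succ_idx i) W
                                  + coord (pred_idx i) W * coord (pred_idx i) W)%C).
  { unfold co_quadric, co_lin. rewrite H0. ring. }
  assert (Hq0 : co_quadric i W <> 0%C) by (rewrite Hq; now apply sum_sq_neq0).
  assert (HA0 : X0 (alt_sig i W) = 0%C) by (rewrite X0_alt_sig, H0; ring).
  split.
  { split; [now apply (nzv_of_coord i); rewrite coord_alt_sig_self|].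
    fold (cubic (alt_sig i W)). rewrite (cubic_infinity i), co_prod_alt_sig, Hc by exact HA0.
    ring. }
  split.
  { destruct (classic (coord i W = 0%C)) as [Hi|Hi].
    - apply (extends_of_identity i quadric (fun X => - co_prod i X)%C);
        [apply alt_sig_quadric_identity|unfold quadric; solve_cont
        |intros c; apply cont_at_alt_sig_entry| |exact HWn].
      replace (quadric W) with (co_quadric i W); [exact Hq0|].
      unfold quadric, co_quadric, co_lin, theta. rewrite H0.
      destruct i; simpl in Hi |- *; rewrite Hi; ring.
    - apply (extends_of_identity i (coord i) X0);
        [apply alt_sig_coord_identity|apply cont_at_coord|intros c; apply cont_at_alt_sig_entry
        |exact Hi|exact HWn]. }
  split; [intros H; contradiction|].
  split.
  - intros [_ [_ Hi]]. apply pt_iff. split; [exact HA0|split].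
    + now rewrite coord_alt_sig_self.
    + intros l Hl. rewrite coord_alt_sig_other, Hi by exact Hl. ring.
  - intros m Hm [_ [HmW Hother]]. split; [exact HA0|split].
    + rewrite coord_alt_sig_other, HmW by auto. ring.
    + intros l Hl. destruct (classic (l = i)) as [->|Hli].
      * now rewrite coord_alt_sig_self.
      * rewrite coord_alt_sig_other by exact Hli. apply Cmult_neq_0; apply Hother; congruence.
Qed.

Lemma sigma_step_exists i W : onS W -> ~ proj_eq (pt i) W -> exists W', sigma_step i W W'.
Proof.
  intros HS Hp. destruct (classic (nzv (sig i W))) as [Hs|Hs].
  - exists (sig i W); now apply sigma_step_defined.
  - assert (H0 : X0 W = 0%C).
    { apply NNPP; intros H0. apply Hs, nzv_of_X0. rewrite X0_sig. now apply Cmult_neq_0. }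
    exists (alt_sig i W). apply sigma_step_alt; auto.
    rewrite sig_infinity in Hs by exact H0.
    apply NNPP; intros Hc. apply Hs, nzv_scale; [|apply nzv_pt].
    intros E. apply Hc. replace (co_prod i W) with (- - co_prod i W)%C by ring. rewrite E; ring.
Qed.

Lemma on_open_L_of_infinity j Z : onS Z -> X0 Z = 0%C -> ~ on_L j Z -> ~ proj_eq (pt j) Z ->
  exists k, k <> j /\ on_open_L k Z.
Proof.
  intros [Hn HS] H0 HL Hp.
  assert (Hj : coord j Z <> 0%C) by (intros E; apply HL; repeat split; auto).
  assert (Hc : co_prod j Z = 0%C).
  { change (cubic Z = 0%C) in HS. rewrite (cubic_infinity j) in HS by exact H0.
    destruct (Cmult_integral _ _ HS); [contradiction|assumption]. }
  assert (Hboth : coord (succ_idx j) Z <> 0%C \/ coord (pred_idx j) Z <> 0%C).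
  { apply NNPP; intros H. apply Hp, pt_iff. repeat split; auto.
    intros l Hl. destruct (idx_cases j l) as [E|[E|E]]; subst l; [congruence| |];
      apply NNPP; intros E; apply H; auto. }
  unfold co_prod in Hc. destruct (Cmult_integral _ _ Hc) as [Hs|Hs].
  - exists (succ_idx j); split; [apply succ_idx_neq|]. repeat split; auto.
    intros l Hl. destruct (idx_cases j l) as [E|[E|E]]; subst l; [auto|congruence|].
    destruct Hboth; [contradiction|assumption].
  - exists (pred_idx j); split; [apply pred_idx_neq|]. repeat split; auto.
    intros l Hl. destruct (idx_cases j l) as [E|[E|E]]; subst l; [auto| |congruence].
    destruct Hboth; [assumption|contradiction].
Qed.

Definition word_extension (j : idx) (w : list idx) (Z W : V4) : Prop :=
  extends (j :: w) Z W /\ onS W /\ (X0 Z <> 0%C -> X0 W <> 0%C) /\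
  (forall i, In i (j :: w) -> on_L i Z -> proj_eq (pt j) W) /\
  (X0 Z = 0%C -> (forall i, In i (j :: w) -> ~ on_L i Z) ->
     exists k, ~ In k (j :: w) /\ on_open_L k Z /\ on_open_L k W).

Lemma word_extension_exists w : forall j, no_repeat (j :: w) -> forall Z, onS Z ->
  ~ proj_eq (pt (last (j :: w) j)) Z -> exists W, word_extension j w Z W.
Proof.
  induction w as [|k w IH]; intros j Hnr Z HZ Hp.
  - destruct (sigma_step_exists j Z HZ Hp) as [W' [HS' [Hc' [Ha' [Hb' Hd']]]]].
    exists W'. split; [|split; [auto|split; [auto|split]]].
    + apply extends_cons with Z; [apply extends_nil|exact Hc'].
    + intros i [<-|[]] HL. auto.
    + intros H0 HnL.
      destruct (on_open_L_of_infinity j Z HZ H0 (HnL j (or_introl eq_refl)) Hp) as [k [Hk Hint]].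
      exists k. split; [simpl; intuition congruence|]. split; auto.
  - destruct Hnr as [Hjk Hnr].
    assert (Hp' : ~ proj_eq (pt (last (k :: w) k)) Z).
    { rewrite (last_cons_default k w k j). exact Hp. }
    destruct (IH k Hnr Z HZ Hp') as [W [Hc [HS [Ha [Hb Hd]]]]].
    (* This is where [j <> k] is used: [W] is [p_k], affine, or on an open line. *)
    assert (HWp : ~ proj_eq (pt j) W).
    { destruct (classic (exists i, In i (k :: w) /\ on_L i Z)) as [[i [Hi HL]]|Hno].
      - intros Hpj. apply Hjk. symmetry. apply (pt_injective k j W); eauto.
      - destruct (classic (X0 Z = 0%C)) as [H0|H0].
        + destruct Hd as [m [_ [_ Hm]]]; auto. { intros i0 Hi0 HL0; apply Hno; eauto. }
          eapply on_open_L_not_pt; eauto.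
        + apply affine_not_pt; auto. }
    destruct (sigma_step_exists j W HS HWp) as [W' [HS' [Hc' [Ha' [Hb' Hd']]]]].
    exists W'. split; [|split; [auto|split; [auto|split]]].
    + apply extends_cons with W; auto.
    + intros i Hi HL.
      destruct (classic (exists i, In i (k :: w) /\ on_L i Z)) as [[i' [Hi' HL']]|Hno].
      * apply Hb'. eapply pt_on_L; eauto.
      * assert (i = j) as ->.
        { destruct Hi as [<-|Hi]; auto. exfalso; eauto. }
        destruct Hd as [m [Hm [HmZ HmW]]]; [apply HL| |].
        { intros i0 Hi0 HL0; apply Hno; eauto. }
        assert (m = j) as -> by exact (on_open_L_unique m j Z HmZ HL).
        apply Hb', on_open_L_on_L, HmW.
    + intros H0 HnL. destruct Hd as [m [Hm [HmZ HmW]]]; auto.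
      { intros i Hi HL. apply (HnL i); simpl; auto. }
      assert (Hmj : m <> j).
      { intros ->. apply (HnL j); [simpl; auto|]. now apply on_open_L_on_L. }
      exists m. split; [|split; auto].
      intros [E|E]; [congruence|contradiction].
Qed.

(** * The graph *)

Notation gr := (graph t1 t2 t3 t4).

Lemma graph_nzv w X Y : gr w X Y -> nzv X /\ nzv Y.
Proof. unfold graph; tauto. Qed.

Lemma graph_fibre_of_extends w Z W Y : extends w Z W -> nzv W -> gr w Z Y -> proj_eq W Y.
Proof.
  intros Hc HW [HZ [HY Hg]]. apply proj_eq_of_minors; auto. intros c c'.
  set (minor := fun V : V4 => (X0 V * X1 V - X2 V * X3 V)%C).
  apply Csub_eq0.
  change (minor (mkV4 (entry c Y) (entry c' W) (entry c' Y) (entry c W)) = 0%C).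
  apply cont_at_closed; [unfold minor; solve_cont|]. intros e He.
  destruct (Hc e He) as [d [Hd Hd']].
  destruct (Hg (Rmin d e) (Rmin_pos _ _ Hd He)) as [X' [Y' [[HS [Hdf ->]] [l [m [H1 H2]]]]]].
  destruct (Hd' X' l HS Hdf (close_mono _ _ _ _ (Rmin_l _ _) H1)) as [m' Hm'].
  apply close_mono with (e' := e) in H2; [|apply Rmin_r].
  rewrite close_iff in H2, Hm'. set (E := ev w X') in *.
  exists (mkV4 (entry c (scale m E)) (entry c' (scale m' E)) (entry c' (scale m E))
            (entry c (scale m' E))).
  split; [apply close_iff; intros []; simpl; auto|].
  unfold minor; simpl. rewrite !entry_scale. ring.
Qed.

Lemma graph_proj_r w X Y Y2 : gr w X Y -> proj_eq Y Y2 -> gr w X Y2.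
Proof.
  intros [HX [HY H]] [_ [HY2 [c [Hc ->]]]]. split; [auto|split; [auto|]]. intros e He.
  assert (Hc0 := Cmod_ge_0 c).
  destruct (H (e / (Cmod c + 1))) as [X' [Y' [Hg [l [m [H1 H2]]]]]].
  { apply Rdiv_lt_0_compat; lra. }
  exists X', Y'; split; auto. exists l, (c * m)%C. split.
  - eapply close_mono; [|apply H1]. apply Rdiv_le_self; lra.
  - apply (close_scale _ _ c) in H2. rewrite scale_scale in H2.
    eapply close_mono; [|apply H2]. right; field; lra.
Qed.

Lemma graph_proj_l w X X2 Y : gr w X Y -> proj_eq X X2 -> gr w X2 Y.
Proof.
  intros [HX [HY H]] [_ [HX2 [c [Hc ->]]]]. split; [auto|split; [auto|]]. intros e He.
  assert (Hc0 := Cmod_ge_0 c).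
  destruct (H (e / (Cmod c + 1))) as [X' [Y' [Hg [l [m [H1 H2]]]]]].
  { apply Rdiv_lt_0_compat; lra. }
  exists X', Y'; split; auto. exists (c * l)%C, m. split.
  - apply (close_scale _ _ c) in H1. rewrite scale_scale in H1.
    eapply close_mono; [|apply H1]. right; field; lra.
  - eapply close_mono; [|apply H2]. apply Rdiv_le_self; lra.
Qed.

Lemma graph_closed_l w X Y : nzv X ->
  (forall e, 0 < e -> exists X1, gr w X1 Y /\ close X X1 e) -> gr w X Y.
Proof.
  intros HX H. destruct (H 1) as [X1 [[_ [HY _]] _]]; [lra|].
  split; [auto|split; [auto|]]. intros e He.
  destruct (H (e / 2)) as [X1' [[_ [_ Hg]] Hcl]]; [lra|].
  destruct (Hg (e / 2)) as [X' [Y' [Hg0 [l [m [H1 H2]]]]]]; [lra|].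
  exists X', Y'; split; auto. exists l, m. split.
  - eapply close_mono; [|eapply close_trans; [apply Hcl|apply H1]]. lra.
  - eapply close_mono; [|apply H2]. lra.
Qed.

Lemma on_S_closed X : nzv X ->
  (forall e, 0 < e -> exists X', cubic X' = 0%C /\ close X X' e) -> onS X.
Proof.
  intros HX H. split; auto. apply (cont_at_closed cubic); [unfold cubic; solve_cont|].
  intros e He. destruct (H e He) as [X' [E Hcl]]. eauto.
Qed.

Lemma graph_on_S w X Y : gr w X Y -> onS X /\ onS Y.
Proof.
  intros [HX [HY H]]. split; apply on_S_closed; auto; intros e He;
    destruct (H e He) as [X' [Y' [[HS [Hdf ->]] [l [m [H1 H2]]]]]].
  - exists (scale l X'); split; auto. rewrite cubic_scale. destruct HS as [_ HS].
    change (cubic X' = 0%C) in HS. rewrite HS; ring.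
  - exists (scale m (ev w X')); split; auto. rewrite cubic_scale.
    destruct (on_S_eval w X' HS Hdf) as [_ HS'].
    change (cubic (ev w X') = 0%C) in HS'. rewrite HS'; ring.
Qed.

(* It is all of [graph] for nonempty words
   ([graph_affine_graph]) and, the [sigma_i] being involutions on [X0 <> 0], it is
   symmetric under reversing the word. *)
Definition affine_graph (w : list idx) (X Y : V4) : Prop :=
  nzv X /\ nzv Y /\ forall e, 0 < e -> exists X', onS X' /\ X0 X' <> 0%C /\
    exists l m : C, close X (scale l X') e /\ close Y (scale m (ev w X')) e.

Definition affine_limit (Z : V4) : Prop :=
  forall e, 0 < e -> exists X', onS X' /\ X0 X' <> 0%C /\ close Z X' e.

Lemma affine_graph_of_extends w Z W :
  extends w Z W -> nzv Z -> nzv W -> affine_limit Z -> affine_graph w Z W.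
Proof.
  intros Hc HZ HW Ha. repeat split; auto. intros e He.
  destruct (Hc e He) as [d [Hd H]].
  destruct (Ha (Rmin d e) (Rmin_pos _ _ Hd He)) as [X' [HS [H0 Hcl]]].
  exists X'; repeat split; auto; try apply HS.
  destruct (H X' 1%C HS (defined_at_affine w X' H0)) as [m Hm].
  { rewrite scale1. eapply close_mono; [apply Rmin_l|eauto]. }
  exists 1%C, m; split; auto. rewrite scale1. eapply close_mono; [apply Rmin_r|eauto].
Qed.

Lemma graph_of_affine_graph w X Y : affine_graph w X Y -> gr w X Y.
Proof.
  intros [HX [HY H]]. repeat split; auto. intros e He.
  destruct (H e He) as [X' [HS [H0 [l [m [H1 H2]]]]]].
  exists X', (ev w X').
  split; [repeat split; auto; [apply HS|apply HS|apply defined_at_affine; auto]|].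
  eauto.
Qed.

Lemma affine_graph_closed w X Y : nzv X -> nzv Y ->
  (forall e, 0 < e -> exists X1 Y1 (l m : C),
     affine_graph w X1 Y1 /\ close X (scale l X1) e /\ close Y (scale m Y1) e) ->
  affine_graph w X Y.
Proof.
  intros HX HY H. repeat split; auto. intros e He.
  destruct (H (e / 2)) as [X1 [Y1 [l [m [[_ [_ Hg]] [H1 H2]]]]]]; [lra|].
  set (e' := Rmin (e / (2 * (Cmod l + 1))) (e / (2 * (Cmod m + 1)))).
  assert (Hl := Cmod_ge_0 l). assert (Hm := Cmod_ge_0 m).
  assert (He' : 0 < e') by (apply Rmin_pos; apply Rdiv_lt_0_compat; lra).
  destruct (Hg e' He') as [X' [HS [H0 [l2 [m2 [H3 H4]]]]]].
  exists X'; split; auto; split; auto. exists (l * l2)%C, (m * m2)%C.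
  apply (close_scale _ _ l) in H3. apply (close_scale _ _ m) in H4.
  rewrite scale_scale in H3, H4.
  assert ((Cmod l + 1) * e' <= e / 2).
  { apply Rle_trans with ((Cmod l + 1) * (e / (2 * (Cmod l + 1)))).
    - apply Rmult_le_compat_l; [lra|apply Rmin_l].
    - right; field; lra. }
  assert ((Cmod m + 1) * e' <= e / 2).
  { apply Rle_trans with ((Cmod m + 1) * (e / (2 * (Cmod m + 1)))).
    - apply Rmult_le_compat_l; [lra|apply Rmin_r].
    - right; field; lra. }
  split; (eapply close_mono; [|eapply close_trans; [eassumption|eassumption]]); lra.
Qed.

Lemma affine_graph_rev w X Y : affine_graph w X Y -> affine_graph (rev w) Y X.
Proof.
  intros [HX [HY H]]. repeat split; auto. intros e He.
  destruct (H e He) as [X' [HS [H0 [l [m [H1 H2]]]]]].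
  exists (ev w X'). split; [apply on_S_eval; auto; apply defined_at_affine; auto|].
  split; [apply X0_eval_affine; auto|].
  destruct (eval_rev w X' H0) as [c [Hc E]].
  exists m, (l / c)%C. split; auto. rewrite E, scale_scale.
  replace (l / c * c)%C with l by (field; auto). auto.
Qed.

(* Along [curve r s] the cubic is [r s^2 + b s + g]; for small [r > 0] a root [s = O(g/b)]
   gives affine points of [S] arbitrarily close to [Z]. *)
Lemma affine_limit_of_curve (b g : V4 -> C) Z (curve : R -> C -> V4) :
  cont_at b Z -> cont_at g Z -> b Z <> 0%C -> g Z = 0%C ->
  (forall (r : R) (s : C) d, 0 < r < d -> Cmod s < d -> close Z (curve r s) d) ->
  (forall r s, cubic (curve r s) = (RtoC r * s * s + b (curve r 0%C) * s + g (curve r 0%C))%C) ->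
  (forall r s, X0 (curve r s) = RtoC r) ->
  affine_limit Z.
Proof.
  intros Hb Hg HbZ HgZ Hcl HSq H0 e He.
  set (B := Cmod (b Z)). assert (HB : 0 < B) by now apply Cmod_gt_0.
  destruct (Hb (B / 2)) as [d1 [Hd1 H1]]; [lra|].
  destruct (Hg (e * B / 8)) as [d2 [Hd2 H2]]; [nra|].
  set (r := Rmin (Rmin d1 d2) e / 2).
  pose proof (Rmin_l (Rmin d1 d2) e). pose proof (Rmin_r (Rmin d1 d2) e).
  pose proof (Rmin_l d1 d2). pose proof (Rmin_r d1 d2).
  assert (Hmp : 0 < Rmin (Rmin d1 d2) e) by (repeat apply Rmin_pos; auto).
  assert (Hr : 0 < r) by (unfold r; lra).
  set (X := curve r 0%C).
  assert (HX1 : close Z X d1) by (apply Hcl; [unfold r; lra|rewrite Cmod_0; lra]).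
  assert (HX2 : close Z X d2) by (apply Hcl; [unfold r; lra|rewrite Cmod_0; lra]).
  specialize (H1 X HX1). specialize (H2 X HX2). rewrite HgZ, Cmod_0_sub in H2.
  assert (HbX : B / 2 < Cmod (b X)).
  { pose proof (Cmod_le_sub (b Z) (b X)) as Hle. fold B in Hle. lra. }
  assert (HbX0 : b X <> 0%C) by (apply Cmod_gt_0; lra).
  destruct (quadratic_small_root (RtoC r) (b X) (g X) HbX0) as [s [Hs Hsb]].
  assert (Hse : Cmod s < e).
  { eapply Rle_lt_trans; [apply Hsb|]. apply (Rmult_lt_reg_r (Cmod (b X))); [lra|].
    unfold Rdiv. rewrite Rmult_assoc, Rinv_l by lra. nra. }
  assert (Hr0 : X0 (curve r s) <> 0%C) by (rewrite H0; apply RtoC_neq0; lra).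
  exists (curve r s). split; [split|split].
  - now apply nzv_of_X0.
  - change (cubic (curve r s) = 0%C). rewrite HSq. exact Hs.
  - exact Hr0.
  - apply Hcl; auto. unfold r; lra.
Qed.

Lemma affine_limit_open_L k Z : onS Z -> on_open_L k Z -> affine_limit Z.
Proof.
  intros HS [H0 [Hk Hj]].
  set (curve := fun (r : R) (s : C) =>
    vec (RtoC r) (fun j => if idx_eq_dec j k then s else coord j Z)).
  apply (affine_limit_of_curve (fun X => co_prod k X - X0 X * X0 X * theta k)%C
           (fun X => cubic (vec (X0 X) (fun j => if idx_eq_dec j k then 0%C else coord j X)))
           Z curve).
  - unfold co_prod. apply cont_at_minus; [apply cont_at_mult; apply cont_at_coord|solve_cont].
  - destruct k; unfold cubic; simpl; solve_cont.
  - rewrite H0. unfold co_prod.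
    replace (coord (succ_idx k) Z * coord (pred_idx k) Z - 0 * 0 * theta k)%C
      with (coord (succ_idx k) Z * coord (pred_idx k) Z)%C by ring.
    apply Cmult_neq_0; apply Hj; [apply succ_idx_neq|apply pred_idx_neq].
  - destruct HS as [_ HS]. change (cubic Z = 0%C) in HS. simpl.
    replace (vec (X0 Z) _) with Z; [exact HS|].
    destruct Z as [a x y z]; simpl in H0 |- *; subst a.
    destruct k; simpl in Hk |- *; subst; reflexivity.
  - intros r s d Hr Hs. apply close_coord_iff. split.
    + simpl. rewrite H0, Cmod_0_sub, Cmod_R, Rabs_right; lra.
    + intros j. destruct k, j; simpl in Hk |- *; rewrite ?Hk, ?Cmod_0_sub, ?Cmod_sub_diag; lra.
  - intros r s. destruct k; unfold cubic, co_prod, theta; simpl; ring.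
  - reflexivity.
Qed.

(* Near [p_i] one has [m sigma_i = mu alt_sig_i] with [mu = m X0 / X_i]; closeness of its
   [X0], [X_j], [X_k] entries to [0] makes [mu X0], [mu X_j], [mu X_k] small, hence also
   [mu co_quadric = mu X_j co_lin_j + mu X_k co_lin_k + mu X0 t4 X0], which should be
   close to [1]. *)
Lemma sig_not_close_pt i Z (m : C) : cubic Z = 0%C -> 1/2 < Cmod (coord i Z) ->
  Cmod (co_lin (succ_idx i) Z) < 1 -> Cmod (co_lin (pred_idx i) Z) < 1 ->
  Cmod (t4 * X0 Z) < 1 -> ~ close (pt i) (scale m (sig i Z)) (1/8).
Proof.
  intros HS Hu G1 G2 G3 Hcl. rewrite close_coord_iff in Hcl. destruct Hcl as [C0 Cj].
  set (u := coord i Z) in *. set (mu := (m * X0 Z / u)%C).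
  assert (Hu0 : u <> 0%C) by (intros E; rewrite E, Cmod_0 in Hu; lra).
  assert (Hs : forall c, (m * entry c (sig i Z) = mu * entry c (alt_sig i Z))%C).
  { intros c. pose proof (alt_sig_coord_identity i Z HS c) as E. fold u in E.
    replace (entry c (sig i Z)) with (X0 Z * entry c (alt_sig i Z) / u)%C.
    - unfold mu. field. exact Hu0.
    - rewrite <- E. field. exact Hu0. }
  assert (Hcoord : forall j, (m * coord j (sig i Z) = mu * coord j (alt_sig i Z))%C)
    by (intros j; rewrite !coord_entry; apply Hs).
  assert (B0 : Cmod (mu * X0 Z) < 1/4).
  { apply (Cmod_factor_small _ u Hu). pose proof (Hs sl0) as E0. simpl in C0, E0.
    rewrite E0 in C0. replace (X0 (pt i)) with (RtoC 0) in C0 by (now destruct i).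
    replace (mu * X0 Z * u)%C with (mu * (X0 Z * u))%C by ring. exact C0. }
  assert (Bo : forall j, j <> i -> Cmod (mu * coord j Z) < 1/4).
  { intros j Hj. apply (Cmod_factor_small _ u Hu). specialize (Cj j).
    rewrite coord_scale, Hcoord, coord_alt_sig_other in Cj by exact Hj.
    replace (coord j (pt i)) with (RtoC 0) in Cj by (destruct i, j; easy).
    replace (mu * coord j Z * u)%C with (mu * (u * coord j Z))%C by ring. exact Cj. }
  specialize (Cj i). rewrite coord_scale, Hcoord, coord_alt_sig_self in Cj.
  replace (coord i (pt i)) with (RtoC 1) in Cj by (destruct i; easy).
  assert (HF : Cmod (mu * co_quadric i Z) < 3/4).
  { unfold co_quadric.
    replace (mu * _)%C with ((mu * coord (succ_idx i) Z) * co_lin (succ_idx i) Z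
      + (mu * coord (pred_idx i) Z) * co_lin (pred_idx i) Z + (mu * X0 Z) * (t4 * X0 Z))%C
      by ring.
    pose proof (Bo _ (succ_idx_neq i)) as B1. pose proof (Bo _ (pred_idx_neq i)) as B2.
    set (a1 := (mu * coord (succ_idx i) Z)%C) in *. set (a2 := (mu * coord (pred_idx i) Z)%C) in *.
    set (a3 := (mu * X0 Z)%C) in *. set (g1 := co_lin (succ_idx i) Z) in *.
    set (g2 := co_lin (pred_idx i) Z) in *. set (g3 := (t4 * X0 Z)%C) in *.
    pose proof (Cmod_triangle (a1 * g1 + a2 * g2) (a3 * g3)).
    pose proof (Cmod_triangle (a1 * g1) (a2 * g2)). rewrite !Cmod_mult in *.
    pose proof (Cmod_ge_0 a1). pose proof (Cmod_ge_0 a2). pose proof (Cmod_ge_0 a3).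
    pose proof (Cmod_ge_0 g1). pose proof (Cmod_ge_0 g2). pose proof (Cmod_ge_0 g3). nra. }
  pose proof (Cmod_le_sub 1%C (mu * co_quadric i Z)%C) as Hle. rewrite Cmod_1 in Hle. lra.
Qed.

Lemma pt_pt_not_in_graph i : ~ gr [i] (pt i) (pt i).
Proof.
  intros [_ [_ H]].
  assert (Hlin : forall j, j <> i -> cont_at (co_lin j) (pt i) /\ co_lin j (pt i) = 0%C).
  { intros j Hj. split; [unfold co_lin; apply cont_at_minus; [apply cont_at_coord|solve_cont]|].
    unfold co_lin. destruct i, j; try congruence; simpl; ring. }
  destruct (Hlin _ (succ_idx_neq i)) as [Hc1 Hz1].
  destruct (Hlin _ (pred_idx_neq i)) as [Hc2 Hz2].
  destruct (cont_at_small _ _ Hc1 Hz1) as [d1 [Hd1 H1]].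
  destruct (cont_at_small _ _ Hc2 Hz2) as [d2 [Hd2 H2]].
  destruct (cont_at_small (fun X => t4 * X0 X)%C (pt i)) as [d3 [Hd3 H3]];
    [solve_cont|destruct i; simpl; ring|].
  pose proof (Rmin_l (Rmin d1 d2) (Rmin d3 (1/8))).
  pose proof (Rmin_r (Rmin d1 d2) (Rmin d3 (1/8))).
  pose proof (Rmin_l d1 d2). pose proof (Rmin_r d1 d2).
  pose proof (Rmin_l d3 (1/8)). pose proof (Rmin_r d3 (1/8)).
  set (d := Rmin (Rmin d1 d2) (Rmin d3 (1/8))) in *.
  assert (Hd : 0 < d) by (unfold d; repeat apply Rmin_pos; lra).
  destruct (H d Hd) as [X' [Y' [[HS [_ ->]] [l [m [HX HY]]]]]]. simpl in HY.
  set (Z := scale l X') in *.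
  assert (HZ : forall e, d <= e -> close (pt i) Z e) by (intros e He; eapply close_mono; eauto).
  assert (Hu : 1/2 < Cmod (coord i Z)).
  { pose proof (proj2 (proj1 (close_coord_iff _ _ _) (HZ (1/8) ltac:(lra))) i) as Hi.
    replace (coord i (pt i)) with (RtoC 1) in Hi by (destruct i; easy).
    pose proof (Cmod_le_sub 1%C (coord i Z)) as Hle. rewrite Cmod_1 in Hle. lra. }
  assert (Hl : l <> 0%C).
  { intros E. unfold Z in Hu. rewrite coord_scale, E, Cmult_0_l, Cmod_0 in Hu. lra. }
  apply (sig_not_close_pt i Z (m / (l * l))).
  - unfold Z. rewrite cubic_scale. destruct HS as [_ HS]. change (cubic X' = 0%C) in HS.
    rewrite HS; ring.
  - exact Hu.
  - apply H1, HZ; lra.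
  - apply H2, HZ; lra.
  - apply H3, HZ; lra.
  - unfold Z. rewrite sig_scale, scale_scale.
    replace (m / (l * l) * (l * l))%C with m by (field; exact Hl).
    eapply close_mono; [|exact HY]. lra.
Qed.

Lemma on_open_L_on_S k Z : on_open_L k Z -> onS Z.
Proof.
  intros HZ. split; [exact (on_open_L_nzv k Z HZ)|]. destruct HZ as [H0 [Hk _]].
  fold (cubic Z). rewrite (cubic_infinity k), Hk by exact H0. ring.
Qed.

Lemma on_open_L_of_sig_defined i X : onS X -> X0 X = 0%C -> nzv (sig i X) -> on_open_L i X.
Proof.
  intros [_ HS] H0 Hs. change (cubic X = 0%C) in HS.
  rewrite sig_infinity in Hs by exact H0. apply nzv_scale_inv in Hs.
  assert (Hc : co_prod i X <> 0%C) by (intros E; apply Hs; rewrite E; ring).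
  unfold co_prod in Hc.
  assert (H1 : coord (succ_idx i) X <> 0%C) by (intros E; apply Hc; rewrite E; ring).
  assert (H2 : coord (pred_idx i) X <> 0%C) by (intros E; apply Hc; rewrite E; ring).
  split; [exact H0|split].
  - rewrite (cubic_infinity i) in HS by exact H0.
    destruct (Cmult_integral _ _ HS); [assumption|contradiction].
  - intros j Hj. destruct (idx_cases i j) as [E|[E|E]]; subst j; [congruence|assumption|assumption].
Qed.

(* A point of the plane at infinity where [sigma_i] is defined is a point of the open line
   [L_i], hence an affine limit, and words of length at least two are defined nowhere at
   infinity; so affine points suffice to describe the graph. *)
Lemma graph_affine_graph i w X Y : gr (i :: w) X Y -> affine_graph (i :: w) X Y.
Proof.
  intros Hg. destruct (graph_nzv _ _ _ Hg) as [HX HY].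
  apply affine_graph_closed; auto. intros e He. destruct Hg as [_ [_ H]].
  destruct (H e He) as [X' [Y' [[HS [Hdf ->]] [l [m [H1 H2]]]]]].
  exists X', (ev (i :: w) X'), l, m. split; auto.
  destruct (classic (X0 X' = 0%C)) as [H0|H0].
  - destruct w as [|j w']; [|exfalso; exact (not_defined_at_infinity i j w' X' H0 Hdf)].
    destruct Hdf as [_ Hs]. simpl in Hs |- *.
    pose proof (on_open_L_of_sig_defined i X' HS H0 Hs) as Hint.
    destruct (sigma_step_defined i X' HS Hs) as [_ [Hc _]].
    apply affine_graph_of_extends; auto; [apply HS|].
    exact (affine_limit_open_L i X' HS Hint).
  - split; [apply HS|split; [apply defined_at_nzv; auto|]]. intros e' He'.
    exists X'. split; auto. split; auto. exists 1%C, 1%C. rewrite !scale1.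
    split; apply close_refl; auto.
Qed.

(** * Exceptional and indeterminacy sets *)

Lemma graph_rev i w X Y : gr (i :: w) X Y -> gr (rev (i :: w)) Y X.
Proof. intros H. apply graph_of_affine_graph, affine_graph_rev, graph_affine_graph, H. Qed.

Lemma graph_line_to_first j w i X : no_repeat (j :: w) -> In i (j :: w) -> on_L i X ->
  gr (j :: w) X (pt j).
Proof.
  intros Hw Hi HL. apply graph_closed_l; [apply HL|]. intros e He.
  destruct (on_L_open_dense i X HL e He) as [Z [HZi HZc]]. exists Z; split; auto.
  assert (HZS : onS Z) by exact (on_open_L_on_S i Z HZi).
  destruct (word_extension_exists w j Hw Z HZS (on_open_L_not_pt _ _ _ HZi))
    as [W [Hc [HWS [_ [Hb _]]]]].
  apply graph_proj_r with W; [|apply proj_eq_sym, (Hb i Hi), on_open_L_on_L, HZi].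
  apply graph_of_affine_graph, affine_graph_of_extends; auto; [apply HZS|apply HWS|].
  exact (affine_limit_open_L i Z HZS HZi).
Qed.

Lemma graph_fibre_single j w X : no_repeat (j :: w) -> onS X ->
  ~ proj_eq (pt (last (j :: w) j)) X -> exists W, forall Y, gr (j :: w) X Y -> proj_eq W Y.
Proof.
  intros Hw HX Hp. destruct (word_extension_exists w j Hw X HX Hp) as [W [Hc [HWS _]]].
  exists W. intros Y HY. apply (graph_fibre_of_extends (j :: w) X); auto. apply HWS.
Qed.

Lemma graph_last_to_line j w X t : no_repeat (j :: w) -> 0 < t ->
  proj_eq (pt (last (j :: w) j)) X -> gr (j :: w) X (line_point (last (j :: w) j) t).
Proof.
  intros Hw Ht HX. set (k := last (j :: w) j) in *.
  destruct (rev_word j w Hw) as [v [Ev [Hv _]]]. fold k in Ev, Hv.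
  assert (HL : on_L k (line_point k t)) by (apply on_open_L_on_L, line_point_open; lra).
  pose proof (graph_line_to_first k v k _ Hv (or_introl eq_refl) HL) as H.
  apply graph_rev in H. rewrite <- Ev, rev_involutive in H.
  exact (graph_proj_l _ _ _ _ H HX).
Qed.

Lemma indet_iff j w X : no_repeat (j :: w) ->
  indet t1 t2 t3 t4 (j :: w) X <-> proj_eq (pt (last (j :: w) j)) X.
Proof.
  intros Hw. split.
  - intros [[Y HY] Hinf]. apply NNPP; intros Hp.
    destruct (graph_fibre_single j w X Hw (proj1 (graph_on_S _ _ _ HY)) Hp) as [W HW].
    exact (not_proj_infinite _ W HW Hinf).
  - intros Hp. split.
    + exists (line_point (last (j :: w) j) 1). apply graph_last_to_line; auto; lra.
    + apply (proj_infinite_line (last (j :: w) j)). intros t Ht. now apply graph_last_to_line.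
Qed.

Lemma infinite_fibre_first_pt j w X Y : no_repeat (j :: w) -> gr (j :: w) X Y ->
  proj_infinite (fun X' => gr (j :: w) X' Y) -> proj_eq (pt j) Y.
Proof.
  intros Hw HXY Hinf. apply NNPP; intros Hp.
  destruct (rev_word j w Hw) as [v [Ev [Hv Hlast]]].
  rewrite <- Hlast in Hp.
  destruct (graph_fibre_single _ v Y Hv (proj2 (graph_on_S _ _ _ HXY)) Hp) as [W HW].
  apply (not_proj_infinite (fun X' => gr (j :: w) X' Y) W); [|exact Hinf].
  intros X' HX'. apply HW. rewrite <- Ev. now apply graph_rev.
Qed.

Lemma exc_iff j w X : no_repeat (j :: w) ->
  exc t1 t2 t3 t4 (j :: w) X <-> exists i, In i (j :: w) /\ on_L i X.
Proof.
  intros Hw. split.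
  - intros [Y [HXY Hinf]].
    pose proof (infinite_fibre_first_pt j w X Y Hw HXY Hinf) as HYp.
    apply NNPP; intros Hno.
    destruct (graph_on_S _ _ _ HXY) as [HXS _].
    destruct (classic (proj_eq (pt (last (j :: w) j)) X)) as [HpX|HpX].
    + destruct w as [|k w'].
      * apply (pt_pt_not_in_graph j).
        apply graph_proj_r with Y; [|now apply proj_eq_sym].
        apply graph_proj_l with X; [exact HXY|now apply proj_eq_sym].
      * destruct (exists_letter_neq_last j k w' Hw) as [i [Hi Hil]].
        apply Hno. exists i. split; auto. now apply (pt_on_L (last (j :: k :: w') j)).
    + destruct (word_extension_exists w j Hw X HXS HpX) as [W [Hc [HWS [Ha [_ Hd]]]]].
      assert (HWp : proj_eq (pt j) W).
      { apply proj_eq_trans with Y; [exact HYp|].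
        apply proj_eq_sym, (graph_fibre_of_extends (j :: w) X); auto. apply HWS. }
      destruct (classic (X0 X = 0%C)) as [H0|H0].
      * destruct Hd as [k [_ [_ Hk]]]; [exact H0|intros i Hi HL; apply Hno; eauto|].
        exact (on_open_L_not_pt k j W Hk HWp).
      * exact (affine_not_pt j W (Ha H0) HWp).
  - intros [i [Hi HL]]. exists (pt j). split; [eapply graph_line_to_first; eauto|].
    apply (proj_infinite_line j). intros t Ht. apply (graph_line_to_first j w j); [auto|now left|].
    apply on_open_L_on_L, line_point_open. lra.
Qed.

Lemma exc_image_iff j w Y : no_repeat (j :: w) ->
  sigma_image t1 t2 t3 t4 (j :: w) (exc t1 t2 t3 t4 (j :: w)) Y <-> proj_eq (pt j) Y.
Proof.
  intros Hw. split.
  - intros [X [Hexc [Hnind HXY]]].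
    destruct (proj1 (exc_iff j w X Hw) Hexc) as [i [Hi HL]].
    assert (HpX : ~ proj_eq (pt (last (j :: w) j)) X)
      by (intros Hp; apply Hnind, indet_iff; auto).
    destruct (graph_fibre_single j w X Hw (proj1 (graph_on_S _ _ _ HXY)) HpX) as [W HW].
    apply proj_eq_trans with W; [apply proj_eq_sym|]; apply HW; [|exact HXY].
    exact (graph_line_to_first j w i X Hw Hi HL).
  - intros Hp. set (X := line_point j 1).
    assert (HX : on_open_L j X) by (apply line_point_open; lra).
    exists X. split; [|split].
    + apply exc_iff; auto. exists j. split; [now left|now apply on_open_L_on_L].
    + intros Hind%indet_iff; auto. exact (on_open_L_not_pt _ _ _ HX Hind).
    + apply graph_proj_r with (pt j); auto.
      apply (graph_line_to_first j w j); [auto|now left|now apply on_open_L_on_L].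
Qed.

End Surface.

Theorem lemma7p2 (t1 t2 t3 t4 : C) (i1 : idx) (w : list idx)
  (Hw : no_repeat (i1 :: w)) :
  (forall X : V4, nzv X ->
     (exc t1 t2 t3 t4 (i1 :: w) X <->
      exists i, In i (i1 :: w) /\ on_L i X)) /\
  (forall Y : V4, nzv Y ->
     (sigma_image t1 t2 t3 t4 (i1 :: w) (exc t1 t2 t3 t4 (i1 :: w)) Y <->
      proj_eq (pt i1) Y)) /\
  (forall X : V4, nzv X ->
     (indet t1 t2 t3 t4 (i1 :: w) X <->
      proj_eq (pt (last (i1 :: w) i1)) X)).
Proof.
  split; [|split]; intros X _.
  - exact (exc_iff t1 t2 t3 t4 i1 w X Hw).
  - exact (exc_image_iff t1 t2 t3 t4 i1 w X Hw).
  - exact (indet_iff t1 t2 t3 t4 i1 w X Hw).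
Qed.
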